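(* Let $T_1,T_2$ be equidistant trees with $n=3$ leaves such that $T_1$ and $T_2$ have different tree topologies. Then, moving along the tropical line segment $\Gamma_{T_1,T_2}$ from $T_1$ to $T_2$, the tree topology changes from the tree topology of $T_1$ to that of the star tree, and then from the star tree to the tree topology of $T_2$.
   Context: Max-plus arithmetic: $a\oplus b=\max\{a,b\}$, $a\odot b=a+b$; vectors in $\mathbb{R}^3$ with coordinates indexed by pairs $12,13,23$ are considered modulo $\mathbb{R}\mathbf 1$. An equidistant tree is a rooted phylogenetic tree on leaves $\{1,2,3\}$ with nonnegative edge lengths and all root-to-leaf distances equal; its ultrametric $u=(u_{12},u_{13},u_{23})$ consists of pairwise leaf distances, and every ultrametric (maximum of the three coordinates attained at least twice) determines a unique such tree. The star tree has all leaves attached to the root (constant ultrametric). $\Gamma_{T_1,T_2}$ denotes the tropical line segment $\{a\odot u\oplus b\odot v:a,b\in\mathbb R\}$ between the ultrametrics $u,v$ of $T_1,T_2$; each of its points is an ultrametric and thus an equidistant tree. *)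

From Stdlib Require Import Reals.
Open Scope R_scope.

(* Coordinates of R^3 indexed by the leaf pairs 12, 13, 23. *)
Inductive leafpair := p12 | p13 | p23.

Definition vec := leafpair -> R.

Definition tplus (a b : R) : R := a + b.
Definition tmax (a b : R) : R := Rmax a b.

Definition trop_comb (a : R) (u : vec) (b : R) (v : vec) : vec :=
  fun k => tmax (tplus a (u k)) (tplus b (v k)).

Definition is_ultrametric (u : vec) : Prop :=
  let m := Rmax (u p12) (Rmax (u p13) (u p23)) in
  (u p12 = m /\ u p13 = m) \/ (u p12 = m /\ u p23 = m) \/ (u p13 = m /\ u p23 = m).

(* Tree topologies of equidistant trees on leaves {1,2,3}: the star tree, or
   a binary tree with a cherry {i,j}. *)
Inductive topology := Star | Cherry (c : leafpair).

Definition has_topology (u : vec) (t : topology) : Prop :=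
  match t with
  | Star => u p12 = u p13 /\ u p13 = u p23
  | Cherry p12 => u p12 < u p13 /\ u p12 < u p23
  | Cherry p13 => u p13 < u p12 /\ u p13 < u p23
  | Cherry p23 => u p23 < u p12 /\ u p23 < u p13
  end.

From Stdlib Require Import Reals Lra.
Open Scope R_scope.

(* Write [D] for the largest coordinate of an ultrametric (its diameter). For
   topology [t], the ultrametric equals [D] off the cherry of [t] and is
   smaller than [D] on it. Up to the shift by [a], a point of the segment is
   [max (u, d + v)] with [d = b - a]. If [d + diam v < diam u], the coordinates
   where [u] reaches [diam u] dominate, so the topology of [u] survives;
   symmetrically for [d + diam v > diam u]. At [d = diam u - diam v] both
   vectors reach the same diameter, and since the cherries differ, every
   coordinate reaches it: the star tree. So the topology switches at a single
   parameter value [s = s']. *)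

Definition diam (u : vec) : R := Rmax (u p12) (Rmax (u p13) (u p23)).

Definition ultrametric_of (u : vec) (t : topology) (D : R) : Prop :=
  forall k, (t = Cherry k -> u k < D) /\ (t <> Cherry k -> u k = D).

Lemma topology_eq_dec (t t' : topology) : {t = t'} + {t <> t'}.
Proof. do 2 decide equality. Qed.

Lemma diam_ge (u : vec) (k : leafpair) : u k <= diam u.
Proof.
  unfold diam.
  pose proof (Rmax_l (u p12) (Rmax (u p13) (u p23))).
  pose proof (Rmax_r (u p12) (Rmax (u p13) (u p23))).
  pose proof (Rmax_l (u p13) (u p23)).
  pose proof (Rmax_r (u p13) (u p23)).
  destruct k; lra.
Qed.

Lemma ultrametric_of_le (u : vec) (t : topology) (D : R) (k : leafpair) :
  ultrametric_of u t D -> u k <= D.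
Proof.
  intros Hu; destruct (Hu k) as [Hc Hn].
  destruct (topology_eq_dec t (Cherry k)) as [E | E].
  - apply Rlt_le, Hc, E.
  - rewrite (Hn E); apply Rle_refl.
Qed.

Lemma ultrametric_of_has_topology (u : vec) (t : topology) (D : R) :
  ultrametric_of u t D -> has_topology u t.
Proof.
  intros Hu.
  destruct (Hu p12) as [C12 N12], (Hu p13) as [C13 N13], (Hu p23) as [C23 N23].
  destruct t as [|[| |]]; simpl.
  - rewrite N12, N13, N23 by discriminate; split; reflexivity.
  - specialize (C12 eq_refl); rewrite N13, N23 by discriminate; split; assumption.
  - specialize (C13 eq_refl); rewrite N12, N23 by discriminate; split; assumption.
  - specialize (C23 eq_refl); rewrite N12, N13 by discriminate; split; assumption.
Qed.

Lemma has_topology_ultrametric_of (u : vec) (t : topology) :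
  is_ultrametric u -> has_topology u t -> ultrametric_of u t (diam u).
Proof.
  intros Hu Ht k.
  pose proof (diam_ge u p12); pose proof (diam_ge u p13);
    pose proof (diam_ge u p23).
  unfold is_ultrametric in Hu; fold (diam u) in Hu.
  destruct t as [|[| |]], k; simpl in Ht;
    split; intros E; try discriminate; try (exfalso; apply E; reflexivity);
    lra.
Qed.

Lemma trop_comb_left (a b M N : R) (u v : vec) (t : topology) :
  ultrametric_of u t M -> (forall k, v k <= N) -> b + N < a + M ->
  ultrametric_of (trop_comb a u b v) t (a + M).
Proof.
  intros Hu Hv Hlt k; unfold trop_comb, tmax, tplus.
  destruct (Hu k) as [Hc Hn]; specialize (Hv k).
  split; intros E.
  - apply Rmax_lub_lt; [specialize (Hc E) |]; lra.
  - rewrite (Hn E); apply Rmax_left; lra.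
Qed.

Lemma trop_comb_right (a b M N : R) (u v : vec) (t : topology) :
  (forall k, u k <= M) -> ultrametric_of v t N -> a + M < b + N ->
  ultrametric_of (trop_comb a u b v) t (b + N).
Proof.
  intros Hu Hv Hlt k; unfold trop_comb, tmax; rewrite Rmax_comm.
  exact (trop_comb_left b a N M v u t Hv Hu Hlt k).
Qed.

Lemma trop_comb_star (a b M N : R) (u v : vec) (t1 t2 : topology) :
  ultrametric_of u t1 M -> ultrametric_of v t2 N -> t1 <> t2 ->
  a + M = b + N -> ultrametric_of (trop_comb a u b v) Star (a + M).
Proof.
  intros Hu Hv Hne Heq k; split; [discriminate | intros _].
  unfold trop_comb, tmax, tplus.
  pose proof (ultrametric_of_le u t1 M k Hu).
  pose proof (ultrametric_of_le v t2 N k Hv).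
  destruct (topology_eq_dec t1 (Cherry k)) as [E1 | E1].
  - assert (E2 : t2 <> Cherry k) by congruence.
    rewrite (proj2 (Hv k) E2), Heq; apply Rmax_right; lra.
  - rewrite (proj2 (Hu k) E1); apply Rmax_left; lra.
Qed.

Theorem lemma1 (u v : vec) (t1 t2 : topology) :
  is_ultrametric u -> is_ultrametric v ->
  has_topology u t1 -> has_topology v t2 -> t1 <> t2 ->
  exists s s' : R, s <= s' /\
    forall a b : R,
      (b - a < s -> has_topology (trop_comb a u b v) t1) /\
      (s <= b - a <= s' -> has_topology (trop_comb a u b v) Star) /\
      (s' < b - a -> has_topology (trop_comb a u b v) t2).
Proof.
  intros Hu Hv H1 H2 Hne.
  pose proof (has_topology_ultrametric_of u t1 Hu H1) as U.
  pose proof (has_topology_ultrametric_of v t2 Hv H2) as V.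
  exists (diam u - diam v), (diam u - diam v); split; [lra |].
  intros a b; split; [| split]; intros Hd.
  - apply (ultrametric_of_has_topology _ _ (a + diam u)).
    apply (trop_comb_left a b _ (diam v)); [exact U | apply diam_ge | lra].
  - apply (ultrametric_of_has_topology _ _ (a + diam u)).
    apply (trop_comb_star a b _ (diam v) u v t1 t2); [exact U | exact V | exact Hne | lra].
  - apply (ultrametric_of_has_topology _ _ (b + diam v)).
    apply (trop_comb_right a b (diam u)); [apply diam_ge | exact V | lra].
Qed.
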